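(* Let $q$ be an odd prime power, $n=2^v$ with $v\ge1$, and $s$ an odd integer. There exists $t\in\mathbb{Z}_{2^v}$ with $qt\equiv t\pmod{2^v}$ such that Type-I duadic splittings of $\mathbb{Z}_{2^v}$ given by $\rho_{s,t}$ exist if and only if $\nu_2(q^j-s)+\nu_2(q-1)>v$ for all integers $j\ge0$.
   Context: $\mu_q:\mathbb{Z}_n\to\mathbb{Z}_n$, $i\mapsto qi\bmod n$; $P$ is $\mu_q$-invariant if $\mu_q(P)=P$. $\rho_{s,t}:\mathbb{Z}_n\to\mathbb{Z}_n$, $i\mapsto s(i+t)\bmod n$. Type-I duadic splittings of $\mathbb{Z}_n$ given by $\rho_{s,t}$ exist if there is a $\mu_q$-invariant $P$ with $\mathbb{Z}_n=P\cup\rho_{s,t}(P)$ a disjoint union. $\nu_2$ is the $2$-adic valuation, $\nu_2(0)=\infty$. *)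

From mathcomp Require Import all_boot all_order all_algebra.
Set Implicit Arguments. Unset Strict Implicit. Unset Printing Implicit Defensive.
Import GRing.Theory Num.Theory.
Local Open Scope ring_scope.

(* Z_n is modelled by 'Z_n; only used with n = 2^v, v >= 1, so n >= 2 and
   'Z_n is genuinely Z/nZ. *)

Definition mu {n : nat} (q : nat) (x : 'Z_n) : 'Z_n := q%:R * x.

Definition rho (n : nat) (s : int) (t x : 'Z_n) : 'Z_n := s%:~R * (x + t).

Definition mu_invariant {n : nat} (q : nat) (P : {set 'Z_n}) : Prop :=
  [set mu q x | x in P] = P.

Definition typeI_duadic_exists {n : nat} (q : nat) (s : int) (t : 'Z_n) : Prop :=
  exists P : {set 'Z_n},
    [/\ mu_invariant q P,
        P :|: [set rho s t x | x in P] = [set: 'Z_n]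
      & [disjoint P & [set rho s t x | x in P]]].

(* 2-adic valuation with nu2 0 = infinity (encoded as None) *)
Definition nu2 (a : int) : option nat :=
  if a == 0 then None else Some (logn 2 `|a|%N).

(* nu2 a + nu2 b > v, with infinity + _ = infinity > v *)
Definition nu2_sum_gt (a b : int) (v : nat) : Prop :=
  match nu2 a, nu2 b with
  | Some x, Some y => (v < x + y)%N
  | _, _ => True
  end.

From HB Require Import structures.
From mathcomp Require Import all_boot all_order all_algebra zify ring.
Import GRing.Theory Num.Theory.
Set Implicit Arguments. Unset Strict Implicit. Unset Printing Implicit Defensive.
Local Open Scope ring_scope.

(* With q and s units, a splitting is a set P fixed by mu_q whose image under
   rho_{s,t} is its complement; so rho_{s,t} x = q^j x is impossible.  If
   a := nu_2(q - 1) and nu_2(q^j - s) + a <= v for some j, then qt = t forces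
   2^(v-a) | t, hence (q^j - s) x = s t is solvable and gives such an x.
   Conversely, if 2^(v-a+1) divides every q^j - s, then q = s = 1 mod 2^(v-a+1);
   with t = 2^(v-a), the set of x whose residue mod 2^(v-a+1) is below
   2^(v-a) is a splitting, since mu_q fixes that residue and rho_{s,t} adds
   half the modulus to it. *)

Lemma imset_fixedP (T : finType) (f : T -> T) (P : {set T}) :
  injective f -> f @: P = P <-> (forall x, (f x \in P) = (x \in P)).
Proof.
move=> f_inj; split=> [fP x | fP]; first by rewrite -{1}fP mem_imset.
by apply/setP=> y; rewrite -(f_invF f_inj y) mem_imset // fP.
Qed.

Lemma imset_complementP (T : finType) (g : T -> T) (P : {set T}) :
  injective g ->
  (P :|: g @: P = setT /\ [disjoint P & g @: P]) <->
  (forall x, (g x \in P) = (x \notin P)).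
Proof.
move=> g_inj; split=> [[cover disj] x | gP].
  have gPC : g @: P = ~: P.
    apply/setP=> y; rewrite inE; apply/idP/idP=> [yg | yNP].
      by rewrite (disjointFl disj yg).
    by have := in_setT y; rewrite -cover inE (negbTE yNP).
  by rewrite -(mem_imset P x g_inj) gPC inE negbK.
have gPC : g @: P = ~: P.
  by apply/setP=> y; rewrite -(f_invF g_inj y) mem_imset // inE gP negbK.
by rewrite gPC setUCr disjoints_subset setCK.
Qed.

Lemma typeI_duadic_existsE n q (s : int) (t : 'Z_n) :
  (q%:R : 'Z_n) \is a GRing.unit -> (s%:~R : 'Z_n) \is a GRing.unit ->
  typeI_duadic_exists q s t <->
  exists P : {set 'Z_n}, (forall x, (mu q x \in P) = (x \in P)) /\
                         (forall x, (rho s t x \in P) = (x \notin P)).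
Proof.
move=> q_unit s_unit.
have mu_inj : injective (@mu n q) by apply: mulrI.
have rho_inj : injective (rho s t) by move=> x y /(mulrI s_unit)/addIr.
split=> [[P [inv cover disj]] | [P [muP rhoP]]].
  exists P; split; first exact: (imset_fixedP P mu_inj).1 inv.
  exact/(imset_complementP P rho_inj).
have [cover disj] := (imset_complementP P rho_inj).2 rhoP.
by exists P; split=> //; apply: (imset_fixedP P mu_inj).2.
Qed.

Lemma typeI_duadic_rho_neq_mu_pow n q (s : int) (t : 'Z_n) :
  (q%:R : 'Z_n) \is a GRing.unit -> (s%:~R : 'Z_n) \is a GRing.unit ->
  typeI_duadic_exists q s t -> forall j x, rho s t x != q%:R ^+ j * x.
Proof.
move=> q_unit s_unit /(typeI_duadic_existsE _ q_unit s_unit) [P [muP rhoP]] j x.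
have mu_powP k y : (q%:R ^+ k * y \in P) = (y \in P).
  by elim: k y => [|k IHk] y; rewrite ?mul1r // exprSr -mulrA IHk muP.
by apply/eqP=> rho_mu; have := rhoP x; rewrite rho_mu mu_powP; case: (x \in P).
Qed.

Lemma Zp_intr_unit (N : nat) (z : int) :
  (1 < N)%N -> coprime N `|z| -> (z%:~R : 'Z_N) \is a GRing.unit.
Proof.
move=> N_gt1 coNz; rewrite [z]intEsign rmorphM rmorph_sign /=.
by rewrite unitrM unitrX ?unitrN1 // -pmulrn unitZpE.
Qed.

Lemma Zp_intr_eq (M : nat) (z w : int) :
  (1 < M)%N -> (M%:Z %| z - w)%Z -> (z%:~R : 'Z_M) = w%:~R.
Proof.
move=> M_gt1 /dvdzP [k zw]; apply/eqP; rewrite -subr_eq0 -rmorphB zw.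
by rewrite rmorphM /= -pmulrn pchar_Zp // mulr0.
Qed.

Lemma Zp_pow_ann_dvd (p v m : nat) (t : 'Z_(p ^ v)) :
  prime p -> (0 < v)%N -> (0 < m)%N -> m%:R * t = 0 ->
  (p ^ (v - logn p m) %| t)%N.
Proof.
move=> p_pr v_gt0 m_gt0 mt0.
have N_gt1 : (1 < p ^ v)%N by rewrite -(expn0 p) ltn_exp2l ?prime_gt1.
have [t0 | t_gt0] := posnP t; first by rewrite t0 dvdn0.
have : (p ^ v %| m * t)%N.
  by rewrite /dvdn -val_Zp_nat // natrM natr_Zp mt0.
by rewrite !pfactor_dvdn ?muln_gt0 ?m_gt0 // lognM //; lia.
Qed.

Lemma Zp_pow_intr_solvable (p v : nat) (d : int) (y : 'Z_(p ^ v)) :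
  prime p -> (0 < v)%N -> d != 0 -> (p ^ logn p `|d| %| y)%N ->
  exists x, d%:~R * x = y.
Proof.
move=> p_pr v_gt0 d_neq0 dvd_y.
have N_gt1 : (1 < p ^ v)%N by rewrite -(expn0 p) ltn_exp2l ?prime_gt1.
have d_gt0 : (0 < `|d|)%N by rewrite absz_gt0.
have [u co_pu dE] := pfactor_coprime p_pr d_gt0.
set e := logn p `|d| in dE dvd_y.
pose c : int := (-1) ^+ (d < 0)%R * u%:Z.
have dc : d%:~R = c%:~R * (p ^ e)%:R :> 'Z_(p ^ v).
  by rewrite {1}[d]intEsign dE PoszM mulrA rmorphM.
have c_unit : (c%:~R : 'Z_(p ^ v)) \is a GRing.unit.
  by rewrite Zp_intr_unit // abszMsign coprime_pexpl.
exists (c%:~R^-1 * (y %/ p ^ e)%:R).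
by rewrite dc mulrAC mulVKr // -natrM divnK // natr_Zp.
Qed.

Section ZpReduction.
Variables (M N : nat).
Hypotheses (M_gt1 : (1 < M)%N) (N_gt0 : (0 < N)%N) (M_dvd_N : (M %| N)%N).

Definition Zp_red (x : 'Z_N) : 'Z_M := (val x)%:R.

Lemma Zp_red_nat n : Zp_red n%:R = n%:R.
Proof.
have N_gt1 : (1 < N)%N by apply: leq_trans M_gt1 (dvdn_leq _ M_dvd_N).
by rewrite /Zp_red /= val_Zp_nat // -Zp_nat_mod // modn_dvdm // Zp_nat_mod.
Qed.

Lemma Zp_red_is_nmod_morphism : nmod_morphism Zp_red.
Proof.
split=> [|x y]; first exact: (Zp_red_nat 0).
by rewrite -[x]natr_Zp -[y]natr_Zp -natrD !Zp_red_nat natrD.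
Qed.

Lemma Zp_red_is_monoid_morphism : monoid_morphism Zp_red.
Proof.
split=> [|x y]; first exact: (Zp_red_nat 1).
by rewrite -[x]natr_Zp -[y]natr_Zp -natrM !Zp_red_nat natrM.
Qed.

HB.instance Definition _ :=
  GRing.isNmodMorphism.Build 'Z_N 'Z_M Zp_red Zp_red_is_nmod_morphism.
HB.instance Definition _ :=
  GRing.isMonoidMorphism.Build 'Z_N 'Z_M Zp_red Zp_red_is_monoid_morphism.

End ZpReduction.

Lemma Zp_add_half_ltE (h : nat) (y : 'Z_h.*2) :
  (0 < h)%N -> (val (y + h%:R)%R < h)%N = (h <= y)%N.
Proof.
move=> h_gt0; have M_gt1 : (1 < h.*2)%N by rewrite -addnn; lia.
have y_lt : (y < h.*2)%N by rewrite -[X in (_ < X)%N]Zp_cast ?ltn_ord.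
rewrite -[X in X + _]natr_Zp -natrD /= val_Zp_nat //.
move: (nat_of_ord y) y_lt => k; rewrite -addnn => k_lt.
have [k_lt_h | h_le_k] := ltnP k h; first by rewrite modn_small; lia.
by rewrite -(subnK h_le_k) -addnA addnn -muln2 modnDr modn_small; lia.
Qed.

Lemma typeI_duadic_half (N h q : nat) (s : int) :
  (0 < N)%N -> (0 < h)%N -> (h.*2 %| N)%N ->
  (q%:R : 'Z_N) \is a GRing.unit -> (s%:~R : 'Z_N) \is a GRing.unit ->
  (q%:R : 'Z_h.*2) = 1 -> (s%:~R : 'Z_h.*2) = 1 ->
  typeI_duadic_exists q s (h%:R : 'Z_N).
Proof.
move=> N_gt0 h_gt0 dvdN q_unit s_unit q1 s1.
have M_gt1 : (1 < h.*2)%N by rewrite -addnn; lia.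
apply/typeI_duadic_existsE => //.
exists [set x | val (@Zp_red h.*2 N x) < h]%N; split=> x; rewrite !inE.
  by rewrite /mu rmorphM ?rmorph_nat // q1 mul1r.
by rewrite /rho rmorphM ?rmorphD ?rmorph_int ?rmorph_nat // s1 mul1r
  Zp_add_half_ltE // -leqNgt.
Qed.

Lemma dvdz2_sub_odd (x y : int) : odd `|x| -> odd `|y| -> (2 %| x - y)%Z.
Proof.
have F2_odd (z : int) : odd `|z| -> z%:~R = 1 :> 'F_2.
  move=> z_odd; rewrite [z]intEsign rmorphM rmorph_sign /= -pmulrn.
  rewrite -Fp_nat_mod // modn2 z_odd mulr1.
  by case: (z < 0)%R; [apply: val_inj|].
move=> /F2_odd x1 /F2_odd y1.
by rewrite (dvdz_pcharf (pchar_Fp (isT : prime 2))) rmorphB /= x1 y1 subrr.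
Qed.

Lemma nu2_sum_gtE (z w : int) (v : nat) : (2 %| z)%Z -> w != 0 ->
  nu2_sum_gt z w v <-> ((2 ^ (v - logn 2 `|w|).+1)%N%:Z %| z)%Z.
Proof.
move=> z_even w_neq0; rewrite /nu2_sum_gt /nu2 (negbTE w_neq0).
have [-> | z_neq0] := eqVneq z 0; first by rewrite dvdz0.
have : (2 ^ 1 %| `|z|)%N := z_even.
rewrite dvdzE /= !pfactor_dvdn ?absz_gt0 //.
by move: (logn 2 _) (logn 2 _) => x y ?; split=> ?; lia.
Qed.

Section TwoAdic.
Variables (v q : nat) (s : int).
Hypotheses (v_gt0 : (0 < v)%N) (q_gt1 : (1 < q)%N) (q_odd : odd q).
Hypothesis s_odd : odd `|s|.

Let b := (v - logn 2 (q - 1))%N.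

Fact pow2_gt1 : (1 < 2 ^ v)%N.
Proof. by rewrite -(expn0 2) ltn_exp2l. Qed.

Fact q_unit : (q%:R : 'Z_(2 ^ v)) \is a GRing.unit.
Proof. by rewrite unitZpE ?pow2_gt1 // coprime_pexpl // coprime2n. Qed.

Fact s_unit : (s%:~R : 'Z_(2 ^ v)) \is a GRing.unit.
Proof. by rewrite Zp_intr_unit ?pow2_gt1 // coprime_pexpl // coprime2n. Qed.

Lemma typeI_duadic_pow2_dvd (t : 'Z_(2 ^ v)) :
  q%:R * t = t -> typeI_duadic_exists q s t ->
  forall j, ((2 ^ b.+1)%N%:Z %| q%:Z ^+ j - s)%Z.
Proof.
move=> qt duadic j; set d := q%:Z ^+ j - s.
have [-> | d_neq0] := eqVneq d 0; first exact: dvdz0.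
rewrite dvdzE /= pfactor_dvdn ?absz_gt0 // leqNgt ltnS; apply/negP => d_small.
have t_dvd : (2 ^ b %| t)%N.
  apply: Zp_pow_ann_dvd => //; first lia.
  by rewrite natrB ?mulrBl ?mul1r ?qt ?subrr //; lia.
have [x dx] := Zp_pow_intr_solvable (isT : prime 2) v_gt0 d_neq0
  (dvdn_trans (dvdn_exp2l 2 d_small) t_dvd).
have rho_eq : rho s t (s%:~R * x) = q%:R ^+ j * (s%:~R * x).
  by rewrite /rho -dx /d rmorphB rmorphXn /= -pmulrn; ring.
by have := typeI_duadic_rho_neq_mu_pow q_unit s_unit duadic j (s%:~R * x);
  rewrite rho_eq eqxx.
Qed.

Lemma pow2_dvd_typeI_duadic :
  (forall j, ((2 ^ b.+1)%N%:Z %| q%:Z ^+ j - s)%Z) ->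
  exists t : 'Z_(2 ^ v), q%:R * t = t /\ typeI_duadic_exists q s t.
Proof.
move=> dvd_pow.
have q1_gt0 : (0 < q - 1)%N by lia.
have a_gt0 : (0 < logn 2 (q - 1))%N.
  by rewrite -(pfactor_dvdn 1) // dvdn2 oddB ?q_odd // ltnW.
have Mh : (2 ^ b.+1 = (2 ^ b).*2)%N by rewrite expnS mul2n.
have M_gt1 : (1 < (2 ^ b).*2)%N by rewrite -Mh -(expn0 2) ltn_exp2l.
exists (2 ^ b)%:R; split.
  rewrite -natrM; apply: val_inj; apply/eqP.
  rewrite /= !val_Zp_nat ?pow2_gt1 //.
  rewrite eqn_mod_dvd ?leq_pmull ?(ltnW q_gt1) // -{2}(mul1n (2 ^ b)%N) -mulnBl.
  rewrite pfactor_dvdn ?muln_gt0 ?expn_gt0 ?q1_gt0 //.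
  by rewrite lognM ?expn_gt0 // pfactorK //; lia.
have s1 : (s%:~R : 'Z_(2 ^ b).*2) = 1%:~R.
  by apply/esym/Zp_intr_eq; rewrite // -Mh; apply: (dvd_pow 0%N).
have q1 : (q%:R : 'Z_(2 ^ b).*2) = 1.
  by rewrite pmulrn (Zp_intr_eq (w := s)) ?s1 // -Mh; apply: (dvd_pow 1%N).
apply: typeI_duadic_half => //; rewrite ?expn_gt0 ?q_unit ?s_unit //.
by rewrite -Mh; apply: dvdn_exp2l; lia.
Qed.

End TwoAdic.

Theorem lemma3p6 (q v : nat) (s : int) :
  (exists p k : nat, [/\ prime p, (0 < k)%N & q = (p ^ k)%N]) ->
  odd q -> (0 < v)%N -> odd `|s|%N ->
  (exists t : 'Z_(2 ^ v), q%:R * t = t /\ typeI_duadic_exists q s t) <->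
  (forall j : nat, nu2_sum_gt (q%:Z ^+ j - s) (q%:Z - 1) v).
Proof.
move=> [p [k [p_pr k_gt0 q_def]]] q_odd v_gt0 s_odd.
have q_gt1 : (1 < q)%N by rewrite q_def -(expn0 p) ltn_exp2l ?prime_gt1.
have nu2E j : nu2_sum_gt (q%:Z ^+ j - s) (q%:Z - 1) v <->
    ((2 ^ (v - logn 2 (q - 1)).+1)%N%:Z %| q%:Z ^+ j - s)%Z.
  rewrite subzn ?(ltnW q_gt1) //; apply: nu2_sum_gtE.
    by rewrite -rmorphXn /= dvdz2_sub_odd //= oddX q_odd orbT.
  by rewrite eqz_nat; lia.
split=> [[t [qt duadic]] j | nu2_gt].
  by apply/nu2E; apply: typeI_duadic_pow2_dvd qt duadic j.
by apply: pow2_dvd_typeI_duadic => // j; apply/nu2E/nu2_gt.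
Qed.
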